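(* Let $T$ be a string, let $1\le j\le |T|$, $1\le i\le j+1$, let $w$ be a string, and let $L=T[1..i-1]$, $R=T[j+1..|T|]$ and $T'=LwR$, with $|L|\ge |R|$ and $|w|\le |L|/2$. Suppose $T'$ is periodic and write $T'=(uv)^k u$ with $k\ge 2$ an integer and strings $u,v$ with $|uv|=\mathsf{per}(T')$. Suppose further that $|uvu|>|Lw|$, and let $x=\mathsf{cov}(\mathsf{bord}(uvu))$. Then $x$ covers $uvu$ if and only if $\mathsf{range}(Lw,|x|)\ge |uvu|-\max\{|u|,|x|\}$.
   Context: $S[i..j]$ denotes the factor of $S$ from position $i$ to $j$ (empty if $i>j$). A border of a nonempty string $S$ is a string that is both a proper prefix and a proper suffix of $S$; $\mathsf{bord}(S)$ is the longest border. If $S$ has a border $b$ then $|S|-|b|$ is a period of $S$; $\mathsf{per}(S)$ is the smallest period, and $S$ is periodic if $\mathsf{per}(S)\le |S|/2$. A string $f$ covers $S$ (is a cover of $S$) if every position of $S$ lies inside some occurrence of $f$ in $S$; $\mathsf{cov}(S)$ is the shortest cover of $S$. For $1\le k\le |S|$, $\mathsf{range}(S,k)$ is the largest $r$ such that $S[1..k]$ covers $S[1..r]$. *)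

(* Strings are sequences over an eqType alphabet A.
   Positions are 0-indexed internally (paper: 1-indexed). *)
From mathcomp Require Import all_boot.
Set Implicit Arguments. Unset Strict Implicit. Unset Printing Implicit Defensive.

Section Strings.
Variable A : eqType.
Implicit Types (S f b : seq A).

Definition is_border b S : bool :=
  (size b < size S) && prefix b S && suffix b S.

Definition bord S : seq A :=
  take (\max_(l < size S | is_border (take l S) S) (l : nat)) S.

Definition is_period (p : nat) S : bool :=
  (0 < p) && all (fun q => onth S q == onth S (q + p)) (iota 0 (size S - p)).

(* per S: the smallest period of S (size S is always a period of a nonempty S). *)
Definition per S : nat := (find (fun p => is_period p S) (iota 1 (size S))).+1.

Definition periodic S : Prop := 2 * per S <= size S.

Definition occurs_at f S (i : nat) : bool :=
  (i + size f <= size S) && (take (size f) (drop i S) == f).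

Definition covers f S : bool :=
  [forall p : 'I_(size S), exists i : 'I_(size S).+1,
     occurs_at f S i && (i <= p < i + size f)].

Definition is_cov x S : Prop :=
  covers x S /\ forall y, covers y S -> size x <= size y.

Definition range S (k : nat) : nat :=
  \max_(r < (size S).+1 | covers (take k S) (take r S)) (r : nat).

End Strings.

(* Write S = uvu and P = Lw, so P is a prefix of S with |P| >= |uv| + |u|/2.
   The shortest cover x of bord S is a border of S, and x has no border y with
   |x|/2 <= |y| < |x|, since such a y would cover x and hence bord S.
   Let c = |S| - max(|u|,|x|); x occurs at c, inside the second u if
   |x| <= |u| and as the suffix of S otherwise.  If x covers S, the occurrence
   covering the last position of S[1..c] overlaps the one at c by less than
   |x|/2, so it ends at some e with c <= e <= |P|, and P[1..|x|] = x covers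
   P[1..e].  Conversely, if x covers S[1..c], the positions of S beyond c are
   covered by the suffix occurrence or, when |x| < |u|, by an occurrence
   inside the first u shifted by the period |uv|. *)

From mathcomp Require Import all_boot zify.
Set Implicit Arguments. Unset Strict Implicit. Unset Printing Implicit Defensive.

Section Covers.
Variable A : eqType.
Implicit Types (f g s S : seq A).

Lemma prefix_by_size f g S :
  prefix f S -> prefix g S -> size f <= size g -> prefix f g.
Proof.
rewrite !prefixE => /eqP fS /eqP gS fg.
by rewrite -gS take_takel // fS.
Qed.

Lemma occurs_atP f S i :
  reflect (exists s1 s2, S = s1 ++ f ++ s2 /\ size s1 = i) (occurs_at f S i).
Proof.
apply: (iffP andP) => [[fS /eqP Sf] | [s1 [s2 [-> <-]]]].
  exists (take i S), (drop (i + size f) S); split; last by rewrite size_takel; lia.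
  by rewrite addnC -drop_drop -{1}Sf !cat_take_drop.
by rewrite drop_size_cat // take_size_cat // !size_cat; split; [lia|].
Qed.

Lemma occurs_at_size f S i : occurs_at f S i -> i + size f <= size S.
Proof. by case/andP. Qed.

Lemma occurs_at_take f S i n :
  i + size f <= n -> occurs_at f (take n S) i = occurs_at f S i.
Proof.
move=> le_n; rewrite /occurs_at size_take_min leq_min le_n !take_drop.
by rewrite take_takel // addnC.
Qed.

Lemma occurs_at_of_take f S i n : occurs_at f (take n S) i -> occurs_at f S i.
Proof.
move=> f_i; have := occurs_at_size f_i; rewrite size_take_min leq_min => /andP [le_n _].
by rewrite -(occurs_at_take _ le_n).
Qed.

Lemma occurs_at0 f S : occurs_at f S 0 = prefix f S.
Proof.
rewrite /occurs_at drop0 prefixE.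
by case: eqP => [<- | _]; rewrite ?andbF // size_take_min geq_minr.
Qed.

Lemma occurs_at_suffix f S : suffix f S -> occurs_at f S (size S - size f).
Proof.
case/suffixP => s ->; apply/occurs_atP; exists s, [::].
by rewrite cats0 size_cat addnK.
Qed.

Lemma occurs_at_trans g f S i j :
  occurs_at g f j -> occurs_at f S i -> occurs_at g S (i + j).
Proof.
case/occurs_atP => [t1 [t2 [-> <-]]] /occurs_atP [s1 [s2 [-> <-]]].
apply/occurs_atP; exists (s1 ++ t1), (t2 ++ s2).
by rewrite !catA size_cat.
Qed.

Lemma occurs_at_overlap f S i j : occurs_at f S i -> occurs_at f S j ->
  i <= j <= i + size f -> prefix (drop (j - i) f) f.
Proof.
case/andP=> _ /eqP fi /andP [_ /eqP fj] /andP [le_ij le_jf].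
have le_df : j - i <= size f by rewrite leq_subLR.
rewrite prefixE size_drop; apply/eqP.
have -> : drop (j - i) f = take (size f - (j - i)) (drop j S).
  by rewrite -{1}fi -{1}(subnK le_df) -take_drop drop_drop (subnK le_ij).
by rewrite -{2}fj take_takel ?leq_subr.
Qed.

Lemma coversP f S : reflect
  (forall p, p < size S -> exists2 i, occurs_at f S i & i <= p < i + size f)
  (covers f S).
Proof.
apply: (iffP forallP) => [cov p lt_p | cov p].
  by have /existsP [i /andP [f_i le_pi]] := cov (Ordinal lt_p); exists i.
have [i f_i le_pi] := cov p (ltn_ord p).
have lt_i : i < (size S).+1 by have := ltn_ord p; lia.
by apply/existsP; exists (Ordinal lt_i); rewrite /= f_i.
Qed.

Lemma covers_nil f : covers f [::].
Proof. by apply/coversP. Qed.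

Lemma covers_size f S : covers f S -> 0 < size S -> size f <= size S.
Proof. by move=> /coversP cov /cov [i /occurs_at_size]; lia. Qed.

Lemma covers_prefix f S : covers f S -> 0 < size S -> prefix f S.
Proof.
move=> /coversP cov /cov [i f_i]; rewrite leqn0 => /andP [/eqP i0 _].
by rewrite -occurs_at0 -i0.
Qed.

Lemma covers_suffix f S : covers f S -> 0 < size S -> suffix f S.
Proof.
move=> /coversP cov S_gt0; have [|i /andP [le_S /eqP f_i] lt_i] := cov (size S).-1.
  by rewrite prednK.
by rewrite -f_i take_oversize ?suffix_drop // size_drop; lia.
Qed.

Lemma covers_border f S :
  prefix f S -> suffix f S -> size S <= 2 * size f -> covers f S.
Proof.
move=> f_pre f_suf le_S; apply/coversP => p lt_p.
have [lt_pf | le_fp] := ltnP p (size f).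
  by exists 0; rewrite ?occurs_at0.
exists (size S - size f); first exact: occurs_at_suffix.
have := size_infix (prefixW f_pre); lia.
Qed.

Lemma covers_trans g f S : covers g f -> covers f S -> covers g S.
Proof.
move=> /coversP cov_g /coversP cov_f; apply/coversP => p lt_p.
have [i f_i lt_pi] := cov_f p lt_p.
have [|j g_j lt_pj] := cov_g (p - i); first lia.
by exists (i + j); [exact: occurs_at_trans g_j f_i | lia].
Qed.

Lemma covers_take f S e : covers f S -> size f <= e ->
  occurs_at f S (e - size f) -> covers f (take e S).
Proof.
move=> /coversP cov le_fe f_e; apply/coversP => p.
rewrite size_take_min leq_min => /andP [lt_pe /cov [i f_i lt_pi]].
have [le_ie | lt_ei] := leqP (i + size f) e.
  by exists i; rewrite ?occurs_at_take.
by exists (e - size f); rewrite ?occurs_at_take ?subnK //; lia.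
Qed.

Lemma is_cov_size x S : is_cov x S -> size x <= size S.
Proof.
case=> x_S x_min; have [/size0nil S0 | ] := posnP (size S).
  by rewrite S0; apply: x_min; rewrite S0 covers_nil.
exact: covers_size.
Qed.

Lemma is_cov_border x S : is_cov x S -> prefix x S && suffix x S.
Proof.
move=> x_cov; have [S0 | S_gt0] := posnP (size S).
  have /size0nil -> : size x = 0 by have := is_cov_size x_cov; lia.
  by rewrite prefix0s suffix0s.
by case: x_cov => x_S _; rewrite covers_prefix ?covers_suffix.
Qed.

Lemma is_cov_border_half x S y : is_cov x S ->
  prefix y x -> suffix y x -> size y < size x -> 2 * size y < size x.
Proof.
case=> x_S x_min y_pre y_suf lt_yx; rewrite ltnNge; apply/negP => le_x.
have := x_min y (covers_trans (covers_border y_pre y_suf le_x) x_S); lia.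
Qed.

Lemma bord_is_border S : 0 < size S -> is_border (bord S) S.
Proof.
move=> S_gt0; rewrite /bord; elim/big_ind: _ => [|m n|//].
  by rewrite /is_border take0 S_gt0 prefix0s suffix0s.
by rewrite /maxn; case: ifP.
Qed.

Lemma range_max S k r :
  r <= size S -> covers (take k S) (take r S) -> r <= range S k.
Proof.
move=> le_r r_cov; exact: (bigmax_sup (Ordinal (le_r : r < (size S).+1)) r_cov).
Qed.

Lemma range_covers S k : covers (take k S) (take (range S k) S).
Proof.
rewrite /range (bigmax_eq_arg ord0) ?take0 ?covers_nil //.
by case: arg_maxnP; rewrite ?take0 ?covers_nil.
Qed.

Lemma range_le_size S k : range S k <= size S.
Proof. by apply/bigmax_leqP => r _; rewrite -ltnS. Qed.

End Covers.

Section PeriodicCover.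
Variables (A : eqType) (u v P x : seq A).
Local Notation S := (u ++ v ++ u).

Lemma occurs_at_shift f i : occurs_at f S i -> i + size f <= size u ->
  occurs_at f S (size (u ++ v) + i).
Proof.
move=> f_i le_u; rewrite -(occurs_at_take _ le_u) take_size_cat // in f_i.
apply: occurs_at_trans f_i _; apply/occurs_atP; exists (u ++ v), [::].
by rewrite cats0 catA.
Qed.

Hypothesis P_prefix : prefix P S.
Hypothesis x_prefix : prefix x S.
Hypothesis x_suffix : suffix x S.

Lemma occurs_at_cut : occurs_at x S (size S - maxn (size u) (size x)).
Proof.
have [le_xu | _] := leqP (size x) (size u); last exact: occurs_at_suffix.
have -> : size S - size u = size (u ++ v) + 0.
  by rewrite addn0 catA size_cat addnK.
by apply: occurs_at_shift; rewrite ?occurs_at0.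
Qed.

Lemma take_P n : n <= size P -> take n P = take n S.
Proof.
move: P_prefix; rewrite prefixE => /eqP P_take le_n.
by rewrite -P_take take_takel.
Qed.

Lemma take_P_x : size x <= size P -> take (size x) P = x.
Proof. by move=> le_x; apply/eqP; rewrite -prefixE (prefix_by_size x_prefix). Qed.

Hypothesis P_long : 2 * size (u ++ v) + size u <= 2 * size P.

Lemma covers_of_range :
  size S - maxn (size u) (size x) <= range P (size x) -> covers x S.
Proof.
set n := range P (size x) => le_cn.
have size_uv := size_cat u v.
have size_S : size S = size (u ++ v) + size u by rewrite catA size_cat.
have [lt_Px | le_xP] := ltnP (size P) (size x).
  by apply: covers_border => //; lia.
have x_n : covers x (take n S).
  by have := range_covers P (size x); rewrite take_P_x // take_P ?range_le_size.
apply/coversP => p lt_p.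
have [lt_pn | le_np] := ltnP p n.
  have [|i x_i lt_pi] := coversP _ _ x_n p; first by rewrite size_take_min; lia.
  by exists i; first exact: occurs_at_of_take x_i.
have [le_sp | lt_ps] := leqP (size S - size x) p.
  by exists (size S - size x); [exact: occurs_at_suffix | lia].
have [|i x_i lt_pi] := coversP _ _ x_n (p - size (u ++ v)).
  by rewrite size_take_min; lia.
exists (size (u ++ v) + i); last lia.
by apply: occurs_at_shift; [exact: occurs_at_of_take x_i | lia].
Qed.

Hypothesis uv_gt0 : 0 < size (u ++ v).
Hypothesis x_short : size x < size S.
Hypothesis x_borders :
  forall y, prefix y x -> suffix y x -> size y < size x -> 2 * size y < size x.

Lemma range_ge_of_covers :
  covers x S -> size S - maxn (size u) (size x) <= range P (size x).
Proof.
move=> x_S; set c := size S - maxn (size u) (size x).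
have size_S : size S = size (u ++ v) + size u by rewrite catA size_cat.
have [|i x_i /andP [le_ic lt_ci]] := coversP _ _ x_S c.-1; first lia.
have lt_ec : 2 * (i + size x - c) < size x.
  have y_pre := occurs_at_overlap x_i occurs_at_cut (ltac:(lia)).
  have := x_borders y_pre (suffix_drop _ _); rewrite size_drop; lia.
have le_eP : i + size x <= size P by lia.
apply: leq_trans (_ : i + size x <= _); first lia.
apply: range_max; rewrite ?take_P_x ?take_P //; try lia.
by apply: covers_take; rewrite ?addnK //; lia.
Qed.

End PeriodicCover.

Theorem lemma15 (A : eqType) (T w : seq A) (i j : nat)
  (hj : 1 <= j <= size T) (hi : 1 <= i <= j.+1)
  (L R T' : seq A)
  (hL : L = take i.-1 T) (hR : R = drop j T) (hT' : T' = L ++ w ++ R)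
  (hLR : size R <= size L) (hw : 2 * size w <= size L)
  (hper : periodic T')
  (u v : seq A) (k : nat) (hk : 2 <= k)
  (hdec : T' = flatten (nseq k (u ++ v)) ++ u)
  (huv : size (u ++ v) = per T')
  (hlong : size (L ++ w) < size (u ++ v ++ u))
  (x : seq A) (hx : is_cov x (bord (u ++ v ++ u))) :
  covers x (u ++ v ++ u) <->
  size (u ++ v ++ u) - maxn (size u) (size x) <= range (L ++ w) (size x).
Proof.
have uv_gt0 : 0 < size (u ++ v) by rewrite huv.
have T'_uvu : T' = (u ++ v ++ u) ++ v ++ flatten (nseq k.-2 (u ++ v)) ++ u.
  by case: k hk hdec => [|[|k]] // _ ->; rewrite /= -!catA.
have P_long : 2 * size (u ++ v) + size u <= 2 * size (L ++ w).
  by have := congr1 size T'_uvu; rewrite {1}hT' !size_cat; lia.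
have P_prefix : prefix (L ++ w) (u ++ v ++ u).
  apply: (@prefix_by_size _ _ _ T'); last exact: ltnW.
    by rewrite hT' catA prefix_prefix.
  by rewrite T'_uvu prefix_prefix.
have /andP [/andP [B_short B_prefix] B_suffix] :
    is_border (bord (u ++ v ++ u)) (u ++ v ++ u).
  by apply: bord_is_border; rewrite catA size_cat addn_gt0 uv_gt0.
have /andP [x_B_prefix x_B_suffix] := is_cov_border hx.
have x_prefix := prefix_trans x_B_prefix B_prefix.
have x_suffix := suffix_trans x_B_suffix B_suffix.
have x_short := leq_ltn_trans (is_cov_size hx) B_short.
have x_borders := is_cov_border_half hx.
by split; [apply: range_ge_of_covers | apply: covers_of_range].
Qed.
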